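(* Let $d\ge1$ be a feasible integer. Let $V$ be a standard $U_q(\widehat{\mathfrak{sl}}_2)$-module of diameter $1$ and $W$ a standard $U_q(\widehat{\mathfrak{sl}}_2)$-module of diameter $d-1$, so that $V\otimes W$ is standard of diameter $d$. Writing $\sigma_n(X)$ for the $n$-th term of the normalized split sequence of a module $X$, we have $\sigma_0(V\otimes W)=1$, $$\sigma_n(V\otimes W)=(q^{d-n}-q^{n-d})(bb^*q^{n-d}-cc^*q^{d-n})\,\sigma_{n-1}(W)+\sigma_n(W)+\sigma_1(V)\,\sigma_{n-1}(W)\qquad(1\le n\le d-1),$$ and $\sigma_d(V\otimes W)=\sigma_1(V)\,\sigma_{d-1}(W)$.
   Context: Let $\mathbb F$ be an algebraically closed field and fix nonzero $q\in\mathbb F$ with $q^2\ne1$; write $[n]_q=(q^n-q^{-n})/(q-q^{-1})$. $U_q(\widehat{\mathfrak{sl}}_2)$ is the associative unital $\mathbb F$-algebra with generators $e_i^{\pm},K_i^{\pm1}$ ($i\in\{0,1\}$) and relations $K_iK_i^{-1}=K_i^{-1}K_i=1$, $K_0K_1=K_1K_0$, $K_ie_i^{\pm}K_i^{-1}=q^{\pm2}e_i^{\pm}$, $K_ie_j^{\pm}K_i^{-1}=q^{\mp2}e_j^{\pm}$ ($i\ne j$), $e_i^+e_i^--e_i^-e_i^+=(K_i-K_i^{-1})/(q-q^{-1})$, $e_0^{\pm}e_1^{\mp}=e_1^{\mp}e_0^{\pm}$, and $(e_i^\pm)^3e_j^\pm-[3]_q(e_i^\pm)^2e_j^\pm e_i^\pm+[3]_qe_i^\pm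 e_j^\pm(e_i^\pm)^2-e_j^\pm(e_i^\pm)^3=0$ ($i\ne j$). Tensor products of modules are formed via $e_i^+(v\otimes w)=e_i^+v\otimes K_iw+v\otimes e_i^+w$, $e_i^-(v\otimes w)=e_i^-v\otimes w+K_i^{-1}v\otimes e_i^-w$, $K_i(v\otimes w)=K_iv\otimes K_iw$. For nonzero $\alpha\in\mathbb F$, $V(\alpha)$ is the module with basis $x,y$ and $K_1x=qx$, $K_1y=q^{-1}y$, $e_1^-x=y$, $e_1^-y=0$, $e_1^+x=0$, $e_1^+y=x$, $K_0x=q^{-1}x$, $K_0y=qy$, $e_0^-x=0$, $e_0^-y=q\alpha^{-1}x$, $e_0^+x=q^{-1}\alpha y$, $e_0^+y=0$. A standard module of diameter $d$ is $V(\alpha_1)\otimes\cdots\otimes V(\alpha_d)$ with all $\alpha_i\in\mathbb F$ nonzero (for $d=0$: the trivial module, on which each $e_i^\pm$ acts as $0$ and each $K_i^{\pm1}$ as $1$). An integer $d$ is feasible if $d\ge0$ and $q^{2i}\ne1$ for $1\le i\le d$. For a standard $V$ of diameter $d$, $U_0$ is the $1$-dimensional span of $x\otimes\cdots\otimes x$. Fix nonzero $b,c,b^*,c^*\in\mathbb F$ and $u,v,u^*,v^*\in\mathbb F$ with $uv^*=-bb^*q^{-1}(q-q^{-1})^2$ and $vu^*=-cc^*q^{-1}(q-q^{-1})^2$; set $R=ue_0^++ve_1^-K_1$ and $L=u^*e_1^++v^*e_0^-K_0$. For a standard module $V$ of feasible diameter $d$ and $0\le i\le d$, $\zeta_i$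 is the scalar by which $L^iR^i$ acts on $U_0$ (the split sequence), and the normalized split sequence is $\sigma_i=\zeta_i/\prod_{k=1}^i(q^k-q^{-k})^2$ (so $\sigma_0=1$). *)

From HB Require Import structures.
From mathcomp Require Import all_boot all_order all_algebra.
Set Implicit Arguments. Unset Strict Implicit. Unset Printing Implicit Defensive.
Import Order.TTheory GRing.Theory Num.Theory.
Local Open Scope ring_scope.

Inductive gen := E0p | E0m | E1p | E1m | K0 | K1 | K0i | K1i.

Section Std.
Variable F : fieldType.
Variable q : F.

(* Vectors of a standard module of diameter d: coordinates w.r.t. the basis
   of pure tensors v_1 (x) ... (x) v_d, indexed by words of length d over
   bool (true = x, false = y).  Coordinates at words of other lengths are
   irrelevant (they stay 0). *)
Definition vec := seq bool -> F.
Definition op := vec -> vec.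

Definition addop (A B : op) : op := fun f w => A f w + B f w.
Definition idop : op := fun f => f.

(* Matrix of a generator on V(a): mV a g b b' = coefficient of basis
   vector b in g . (basis vector b'). *)
Definition mV (a : F) (g : gen) (b b' : bool) : F :=
  match g, b, b' with
  | K1, true, true => q | K1, false, false => q^-1
  | K1i, true, true => q^-1 | K1i, false, false => q
  | K0, true, true => q^-1 | K0, false, false => q
  | K0i, true, true => q | K0i, false, false => q^-1
  | E1m, false, true => 1
  | E1p, true, false => 1
  | E0m, true, false => q / a
  | E0p, false, true => a / q
  | _, _, _ => 0
  end.

Definition id2 (b b' : bool) : F := if b == b' then 1 else 0.

(* A (x) B, for A acting on the first tensor factor V(a) and B on the rest *)
Definition tens (A : bool -> bool -> F) (B : op) : op := fun f w =>
  match w with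
  | [::] => 0
  | b :: w' => A b true * B (fun u => f (true :: u)) w'
             + A b false * B (fun u => f (false :: u)) w'
  end.

(* Action of the generators on V(a_1) (x) (V(a_2) (x) ( ... (x) (V(a_d) (x) triv))),
   using the coproduct given in the paper. *)
Fixpoint act (s : seq F) : gen -> op :=
  match s with
  | [::] => fun g f w =>
      match g with
      | K0 | K1 | K0i | K1i => if w is [::] then f [::] else 0
      | _ => 0
      end
  | a :: s' => fun g =>
      match g with
      | E0p => addop (tens (mV a E0p) (act s' K0)) (tens id2 (act s' E0p))
      | E1p => addop (tens (mV a E1p) (act s' K1)) (tens id2 (act s' E1p))
      | E0m => addop (tens (mV a E0m) idop) (tens (mV a K0i) (act s' E0m))
      | E1m => addop (tens (mV a E1m) idop) (tens (mV a K1i) (act s' E1m))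
      | K0 => tens (mV a K0) (act s' K0)
      | K1 => tens (mV a K1) (act s' K1)
      | K0i => tens (mV a K0i) (act s' K0i)
      | K1i => tens (mV a K1i) (act s' K1i)
      end
  end.

Variables u v us vs : F.

Definition Rop (s : seq F) : op := fun f w =>
  u * act s E0p f w + v * act s E1m (act s K1 f) w.
Definition Lop (s : seq F) : op := fun f w =>
  us * act s E1p f w + vs * act s E0m (act s K0 f) w.

(* the vector x (x) ... (x) x spanning U_0 *)
Definition u0 (d : nat) : vec := fun w => if w == nseq d true then 1 else 0.

(* split sequence: zeta_i is the scalar by which L^i R^i acts on U_0,
   read off as the coefficient of x (x) ... (x) x in L^i R^i (x (x) ... (x) x). *)
Definition zeta (s : seq F) (i : nat) : F :=
  iter i (Lop s) (iter i (Rop s) (u0 (size s))) (nseq (size s) true).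

Definition sigma (s : seq F) (i : nat) : F :=
  zeta s i / \prod_(1 <= k < i.+1) (q ^+ k - q ^- k) ^+ 2.

End Std.

Definition feasible (F : fieldType) (q : F) (d : nat) : Prop :=
  forall i : nat, (1 <= i <= d)%N -> q ^+ (2 * i) != 1.

(* A vector of a standard module of diameter n is a coordinate function on
   words of length n over {x, y}; a vector of V(a) (x) W is x (x) X + y (x) Y,
   written [join X Y].  The proof has four steps.
   1. Coproduct formulas: every generator, hence R and L, acts on [join X Y]
      through its action and the K_i-action on W.  R and L shift the
      (K_0, K_1)-weights by (q^2, q^-2) and (q^-2, q^2) respectively.
   2. Branching: as R^k u0 is a weight vector, R^(k+1) u0 on V(a) (x) W is
      x (x) R^(k+1) u0 + A y (x) R^k u0 with A a sum of weights, similarly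
      for L, so zeta_(k+1)(V(a) (x) W) = zeta_(k+1)(W) + B A zeta_k(W).
   3. Closed forms: A and B are (q^(k+1) - q^-(k+1)) / (q - q^-1) times
      Laurent binomials in M = q^(n-k); normalizing gives
      sigma_(k+1)(V(a) (x) W) = sigma_(k+1)(W) + coupling(M) sigma_k(W), and
      the constraints on u v^*, v u^* split coupling(M) into
      (M - M^-1)(b b^* M^-1 - c c^* M) + coupling(1).
   4. Boundary values: coupling(1) = sigma_1(V(a)) (the case n = 0), and
      sigma_(n+1)(W) = 0 when n+1 is feasible, because the K_1-eigenvalue of
      R^(n+1) u0 is not an eigenvalue of K_1 in diameter n. *)

From HB Require Import structures.
From mathcomp Require Import all_boot all_order all_algebra ring.
From Stdlib Require Import FunctionalExtensionality.
Import Order.TTheory GRing.Theory Num.Theory.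
Local Open Scope ring_scope.
Set Implicit Arguments. Unset Strict Implicit.

Ltac field_nz := field; repeat (apply/andP; split); rewrite ?oner_neq0 ?expf_neq0 //.

Section QArithmetic.
Variable F : fieldType.

Lemma qdiff_neq0 (x : F) j : x != 0 -> x ^+ (2 * j) != 1 -> x ^+ j - x ^- j != 0.
Proof.
move=> x_neq0; apply: contra; rewrite subr_eq0 => /eqP h.
by rewrite mulnC exprM expr2 {1}h mulVf // expf_neq0.
Qed.

Lemma geom_sq (x : F) k : x != 0 -> x - x^-1 != 0 ->
  \sum_(i < k.+1) (x * x) ^+ i = x ^+ k * (x ^+ k.+1 - x ^- k.+1) / (x - x^-1).
Proof.
move=> x_neq0 hx; have xk_neq0 : x ^+ k != 0 by rewrite expf_neq0.
have xx1 : x * x - 1 != 0.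
  by apply: contra hx; rewrite subr_eq0 => /eqP h; rewrite subr_eq0 -[x in _ == x]mulr1 -h mulKf.
by apply: (mulfI xx1); rewrite -subrX1 exprMn !exprS; field_nz.
Qed.

(* If x^(t-f), the K_1-eigenvalue of a word with t letters x and f letters y,
   equals x^n x^(-2(n+1)) with n = t + f, then x^(2(t+1)) = 1. *)
Lemma weight_gap (x : F) t f : x != 0 ->
  x ^+ t * x ^- f = x ^+ (t + f) * (x^-1 * x^-1) ^+ (t + f).+1 -> x ^+ (2 * t.+1) = 1.
Proof.
move=> x_neq0 E; have xt_neq0 : x ^+ t != 0 by rewrite expf_neq0.
have xf_neq0 : x ^+ f != 0 by rewrite expf_neq0.
rewrite exprS exprMn !exprVn exprD in E.
have -> : x ^+ (2 * t.+1) = x ^+ t * x ^- f * (x * x * x ^+ t * x ^+ f)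
  by rewrite mulnC exprM expr2 exprS; field_nz.
by rewrite E; field_nz.
Qed.

End QArithmetic.

Section StandardModule.
Variables (F : fieldType) (q : F).
Hypothesis q_neq0 : q != 0.

Definition vadd (f g : vec F) : vec F := fun w => f w + g w.
Definition vscale (c : F) (f : vec F) : vec F := fun w => c * f w.
Definition vzero : vec F := fun _ => 0.

(* A vector of V(a) (x) W is x (x) X + y (x) Y; [join X Y] builds it and
   [tailx], [taily] recover the components X and Y. *)
Definition join (X Y : vec F) : vec F := fun w =>
  match w with [::] => 0 | true :: w' => X w' | false :: w' => Y w' end.
Definition tailx (f : vec F) : vec F := fun w => f (true :: w).
Definition taily (f : vec F) : vec F := fun w => f (false :: w).

Lemma tailx_join X Y : tailx (join X Y) = X. Proof. by []. Qed.
Lemma taily_join X Y : taily (join X Y) = Y. Proof. by []. Qed.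

Ltac vec_ext := let w := fresh "w" in
  apply: functional_extensionality => w; case: w => [|[] w];
  rewrite /= /vadd /vscale /vzero /join /tailx /taily /addop /tens /id2 /idop /u0 /=;
  first [ring | field_nz].

Notation act := (act q).

Lemma actE0p a s f : act (a :: s) E0p f =
  join (act s E0p (tailx f))
       (vadd (vscale (a / q) (act s K0 (tailx f))) (act s E0p (taily f))).
Proof. vec_ext. Qed.
Lemma actE1p a s f : act (a :: s) E1p f =
  join (vadd (act s K1 (taily f)) (act s E1p (tailx f))) (act s E1p (taily f)).
Proof. vec_ext. Qed.
Lemma actE0m a s f : act (a :: s) E0m f =
  join (vadd (vscale (q / a) (taily f)) (vscale q (act s E0m (tailx f))))
       (vscale q^-1 (act s E0m (taily f))).
Proof. vec_ext. Qed.
Lemma actE1m a s f : act (a :: s) E1m f =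
  join (vscale q^-1 (act s E1m (tailx f))) (vadd (tailx f) (vscale q (act s E1m (taily f)))).
Proof. vec_ext. Qed.
Lemma actK0 a s f : act (a :: s) K0 f =
  join (vscale q^-1 (act s K0 (tailx f))) (vscale q (act s K0 (taily f))).
Proof. vec_ext. Qed.
Lemma actK1 a s f : act (a :: s) K1 f =
  join (vscale q (act s K1 (tailx f))) (vscale q^-1 (act s K1 (taily f))).
Proof. vec_ext. Qed.
(* The formulas for K_0^-1 and K_1^-1 are only needed for linearity. *)
Lemma actK0i a s f : act (a :: s) K0i f =
  join (vscale q (act s K0i (tailx f))) (vscale q^-1 (act s K0i (taily f))).
Proof. vec_ext. Qed.
Lemma actK1i a s f : act (a :: s) K1i f =
  join (vscale q^-1 (act s K1i (tailx f))) (vscale q (act s K1i (taily f))).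
Proof. vec_ext. Qed.

Ltac act_cons := rewrite ?actE0p ?actE1p ?actE0m ?actE1m ?actK0 ?actK1 ?actK0i ?actK1i
  ?tailx_join ?taily_join.

Lemma act_lin s g c1 c2 f1 f2 :
  act s g (vadd (vscale c1 f1) (vscale c2 f2)) =
  vadd (vscale c1 (act s g f1)) (vscale c2 (act s g f2)).
Proof.
elim: s g c1 c2 f1 f2 => [|a s IH] g c1 c2 f1 f2; first by case: g; vec_ext.
have tailxL f h : tailx (vadd (vscale c1 f) (vscale c2 h)) =
  vadd (vscale c1 (tailx f)) (vscale c2 (tailx h)) by [].
have tailyL f h : taily (vadd (vscale c1 f) (vscale c2 h)) =
  vadd (vscale c1 (taily f)) (vscale c2 (taily h)) by [].
by case: g; act_cons; rewrite tailxL tailyL !IH; vec_ext.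
Qed.

Lemma act_add s g f1 f2 : act s g (vadd f1 f2) = vadd (act s g f1) (act s g f2).
Proof.
have -> : vadd f1 f2 = vadd (vscale 1 f1) (vscale 1 f2) by vec_ext.
by rewrite act_lin; vec_ext.
Qed.

Lemma act_scale s g c f : act s g (vscale c f) = vscale c (act s g f).
Proof.
have -> : vscale c f = vadd (vscale c f) (vscale 0 f) by vec_ext.
by rewrite act_lin; vec_ext.
Qed.

Lemma act_zero s g : act s g vzero = vzero.
Proof.
have -> : vzero = vscale 0 vzero by vec_ext.
by rewrite act_scale; vec_ext.
Qed.

Ltac push_lin := rewrite ?act_add ?act_scale.

Lemma act_K1K0 s f : act s K1 (act s K0 f) = act s K0 (act s K1 f).
Proof. by elim: s f => [|a s IH] f; [vec_ext | act_cons; push_lin; rewrite !IH; vec_ext]. Qed.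

(* The Chevalley generators e_i^{+-} and the factors by which K_0 and K_1
   rescale them: K_i e K_i^{-1} = (shift_i e) e. *)
Definition chevalley (g : gen) : bool :=
  match g with E0p | E1m | E1p | E0m => true | _ => false end.
Definition shift0 (g : gen) : F :=
  match g with E0p | E1m => q * q | E1p | E0m => q^-1 * q^-1 | _ => 1 end.
Definition shift1 (g : gen) : F :=
  match g with E0p | E1m => q^-1 * q^-1 | E1p | E0m => q * q | _ => 1 end.

(* Joint induction for both K_i; the coefficient q/a of e_0^- is generalized
   so that no hypothesis a <> 0 is needed. *)
Lemma act_KE s g : chevalley g -> forall f,
  act s K0 (act s g f) = vscale (shift0 g) (act s g (act s K0 f)) /\
  act s K1 (act s g f) = vscale (shift1 g) (act s g (act s K1 f)).
Proof.
elim: s g => [|a s IH] g hg f; first by case: g hg => // _; split; vec_ext.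
case: g hg => // _;
  [set g0 := E0p | set g0 := E0m | set g0 := E1p | set g0 := E1m];
  have I0 := fun f => proj1 (IH g0 isT f); have I1 := fun f => proj2 (IH g0 isT f);
  rewrite /g0 /= in I0 I1; split; act_cons; push_lin;
  rewrite ?I0 ?I1 ?act_K1K0; push_lin; move: (q / a) => c; vec_ext.
Qed.

Lemma act_K0E s g : chevalley g -> forall f,
  act s K0 (act s g f) = vscale (shift0 g) (act s g (act s K0 f)).
Proof. by move=> hg f; case: (act_KE s hg f). Qed.
Lemma act_K1E s g : chevalley g -> forall f,
  act s K1 (act s g f) = vscale (shift1 g) (act s g (act s K1 f)).
Proof. by move=> hg f; case: (act_KE s hg f). Qed.

Variables u v us vs : F.
Notation R s := (Rop q u v s).
Notation L s := (Lop q us vs s).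

Lemma RopE s f : R s f = vadd (vscale u (act s E0p f)) (vscale v (act s E1m (act s K1 f))).
Proof. by []. Qed.
Lemma LopE s f : L s f = vadd (vscale us (act s E1p f)) (vscale vs (act s E0m (act s K0 f))).
Proof. by []. Qed.

Lemma R_scale s c f : R s (vscale c f) = vscale c (R s f).
Proof. by rewrite !RopE; push_lin; vec_ext. Qed.
Lemma L_scale s c f : L s (vscale c f) = vscale c (L s f).
Proof. by rewrite !LopE; push_lin; vec_ext. Qed.
Lemma L_add s f g : L s (vadd f g) = vadd (L s f) (L s g).
Proof. by rewrite !LopE; push_lin; vec_ext. Qed.
Lemma R_zero s : R s vzero = vzero.
Proof. by rewrite RopE !act_zero; vec_ext. Qed.
Lemma L_zero s : L s vzero = vzero.
Proof. by rewrite LopE !act_zero; vec_ext. Qed.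

Lemma R_cons a s X Y : R (a :: s) (join X Y) =
  join (R s X) (vadd (R s Y)
    (vadd (vscale (u * (a / q)) (act s K0 X)) (vscale (v * q) (act s K1 X)))).
Proof. by rewrite !RopE; act_cons; push_lin; vec_ext. Qed.
Lemma L_cons a s X Y : L (a :: s) (join X Y) =
  join (vadd (L s X)
         (vadd (vscale us (act s K1 Y)) (vscale (vs * (q / a) * q) (act s K0 Y))))
       (L s Y).
Proof. by rewrite !LopE; act_cons; push_lin; move: (q / a) => c; vec_ext. Qed.

Definition weight s (f : vec F) (l0 l1 : F) :=
  act s K0 f = vscale l0 f /\ act s K1 f = vscale l1 f.

Lemma weight_scale s f l0 l1 c : weight s f l0 l1 -> weight s (vscale c f) l0 l1.
Proof. by case=> h0 h1; split; rewrite act_scale ?h0 ?h1; vec_ext. Qed.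

Lemma R_weight s f l0 l1 : weight s f l0 l1 ->
  weight s (R s f) (l0 * (q * q)) (l1 * (q^-1 * q^-1)).
Proof.
case=> h0 h1; have E0 := act_K0E s (g := E0p) isT; have E1 := act_K1E s (g := E0p) isT.
have F0 := act_K0E s (g := E1m) isT; have F1 := act_K1E s (g := E1m) isT.
by split; rewrite RopE; push_lin; rewrite ?E0 ?F0 ?E1 ?F1 -?act_K1K0 ?h0 ?h1; push_lin;
  rewrite ?h0 ?h1; push_lin; vec_ext.
Qed.
Lemma L_weight s f l0 l1 : weight s f l0 l1 ->
  weight s (L s f) (l0 * (q^-1 * q^-1)) (l1 * (q * q)).
Proof.
case=> h0 h1; have E0 := act_K0E s (g := E1p) isT; have E1 := act_K1E s (g := E1p) isT.
have F0 := act_K0E s (g := E0m) isT; have F1 := act_K1E s (g := E0m) isT.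
by split; rewrite LopE; push_lin; rewrite ?E0 ?F0 ?E1 ?F1 ?act_K1K0 ?h0 ?h1; push_lin;
  rewrite ?h0 ?h1; push_lin; vec_ext.
Qed.

Lemma u0_cons n : u0 F n.+1 = join (u0 F n) vzero.
Proof. by apply: functional_extensionality => -[|[] w]. Qed.

Lemma u0_weight s : weight s (u0 F (size s)) (q^-1 ^+ size s) (q ^+ size s).
Proof.
elim: s => [|a s [IH0 IH1]]; first by split; rewrite !expr0; vec_ext.
by split; rewrite [size _]/= u0_cons; act_cons; rewrite act_zero ?IH0 ?IH1 !exprS; vec_ext.
Qed.

Definition weight0 n k : F := q^-1 ^+ n * (q * q) ^+ k.
Definition weight1 n k : F := q ^+ n * (q^-1 * q^-1) ^+ k.
Definition Rpow s k : vec F := iter k (R s) (u0 F (size s)).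

Lemma Rpow_weight s k : weight s (Rpow s k) (weight0 (size s) k) (weight1 (size s) k).
Proof.
elim: k => [|k IH]; first by rewrite /weight0 /weight1 !expr0 !mulr1; exact: u0_weight.
rewrite /Rpow iterS /weight0 /weight1 !exprSr.
by rewrite ?(mulrA _ _ (q * q)) ?(mulrA _ _ (q^-1 * q^-1)); exact: R_weight.
Qed.

Lemma iter_L_scale s c f k : iter k (L s) (vscale c f) = vscale c (iter k (L s) f).
Proof. by elim: k => //= k ->; rewrite L_scale. Qed.

Lemma iter_L_weight s f l0 l1 k : weight s f l0 l1 ->
  weight s (iter k (L s) f) (l0 * (q^-1 * q^-1) ^+ k) (l1 * (q * q) ^+ k).
Proof.
move=> hf; elim: k => [|k IH]; first by rewrite !expr0 !mulr1.
by rewrite iterS !exprSr ?(mulrA _ _ (q * q)) ?(mulrA _ _ (q^-1 * q^-1)); exact: L_weight.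
Qed.

Definition coefR a n i : F := u * (a / q) * weight0 n i + v * q * weight1 n i.

Lemma iter_R_cons a s k :
  iter k.+1 (R (a :: s)) (u0 F (size s).+1) =
  join (Rpow s k.+1) (vscale (\sum_(i < k.+1) coefR a (size s) i) (Rpow s k)).
Proof.
have W0 k := proj1 (Rpow_weight s k); have W1 k := proj2 (Rpow_weight s k).
elim: k => [|k IH].
  have [U0 U1] := u0_weight s.
  by rewrite /= u0_cons R_cons R_zero U0 U1 big_ord1 /coefR /weight0 /weight1 !expr0; vec_ext.
by rewrite iterS IH R_cons R_scale W0 W1 (big_ord_recr k.+1) /= /coefR; vec_ext.
Qed.

Definition coefL a l1 l0 i : F :=
  us * (l1 * (q * q) ^+ i) + vs * (q / a) * q * (l0 * (q^-1 * q^-1) ^+ i).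

Lemma iter_L_cons a s X Y l0 l1 k : weight s Y l0 l1 ->
  iter k.+1 (L (a :: s)) (join X Y) =
  join (vadd (iter k.+1 (L s) X)
             (vscale (\sum_(i < k.+1) coefL a l1 l0 i) (iter k (L s) Y)))
       (iter k.+1 (L s) Y).
Proof.
move=> hY; have W0 k := proj1 (iter_L_weight k hY); have W1 k := proj2 (iter_L_weight k hY).
elim: k => [|k IH].
  by rewrite /= L_cons (proj1 hY) (proj2 hY) big_ord1 /coefL !expr0; vec_ext.
by rewrite iterS IH L_cons L_add L_scale W0 W1 (big_ord_recr k.+1) /= /coefL; vec_ext.
Qed.

Lemma zeta_cons a s k :
  zeta q u v us vs (a :: s) k.+1 = zeta q u v us vs s k.+1 +
    (\sum_(i < k.+1) coefL a (weight1 (size s) k) (weight0 (size s) k) i)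
    * (\sum_(i < k.+1) coefR a (size s) i) * zeta q u v us vs s k.
Proof.
rewrite /zeta [size _]/= iter_R_cons.
rewrite (iter_L_cons _ _ _ (weight_scale _ (Rpow_weight s k))) iter_L_scale /Rpow /=.
by rewrite /vadd /vscale; ring.
Qed.

Lemma act_K1_coord s f w : act s K1 f w =
  if size w == size s then q ^+ count id w * q ^- count negb w * f w else 0.
Proof.
elim: s f w => [|a s IH] f [|b w] //; first by rewrite /= !expr0 invr1 !mul1r.
rewrite actK1; case: b; rewrite /= /vscale IH eqSS;
  case: (size w == size s); rewrite ?mulr0 // ?add1n ?add0n ?exprS /tailx /taily; field_nz.
Qed.

(* Feasibility of n+1 forces R^(n+1) u0 = 0: its K_1-eigenvalue
   q^(n - 2(n+1)) is not an eigenvalue of K_1 in diameter n. *)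
Lemma Rpow_top s : feasible q (size s).+1 ->
  Rpow s (size s).+1 = vzero.
Proof.
move=> feas; apply: functional_extensionality => w; rewrite /vzero.
set r := Rpow s _ w.
have : act s K1 (Rpow s (size s).+1) w = weight1 (size s) (size s).+1 * r.
  by rewrite (proj2 (Rpow_weight s _)).
rewrite act_K1_coord.
have lam_neq0 : weight1 (size s) (size s).+1 != 0.
  by rewrite /weight1 mulf_neq0 ?expf_neq0 ?mulf_neq0 ?invr_eq0.
case: eqVneq => [hw|_]; last by move/esym/eqP; rewrite mulf_eq0 (negbTE lam_neq0) => /eqP.
have [//|r_neq0] := eqVneq r 0; move/(mulIf r_neq0) => eq_weight.
have hn : size s = (count id w + count negb w)%N by rewrite -hw -(count_predC id w).
have t_le : (1 <= (count id w).+1 <= (size s).+1)%N by rewrite !ltnS -hw count_size.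
have gap : q ^+ (2 * (count id w).+1) = 1.
  by apply: (weight_gap q_neq0 (f := count negb w)); rewrite -hn.
by have := feas _ t_le; rewrite gap eqxx.
Qed.

Lemma zeta_top s : feasible q (size s).+1 ->
  zeta q u v us vs s (size s).+1 = 0.
Proof.
move=> feas; rewrite /zeta -/(Rpow s _) Rpow_top //.
suff -> : forall k, iter k (L s) vzero = vzero by [].
by elim=> //= k ->; exact: L_zero.
Qed.

(* Closed forms of the two sums in the branching rule; they carry the
   factor q^(k+1) - q^-(k+1) and depend on n, k only through M = q^(n-k). *)
Section BranchingSums.
Hypothesis qdiff1 : q - q^-1 != 0.

(* The form in which [field] asks for q - q^-1 <> 0. *)
Let qq1 : q * q - 1 != 0.
Proof.
apply: contra qdiff1; rewrite !subr_eq0 => /eqP qq.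
by rewrite -[q^-1]mulr1 -qq mulKf.
Qed.

Let sum_qinv k :
  \sum_(i < k.+1) (q^-1 * q^-1) ^+ i = q ^- k * (q ^+ k.+1 - q ^- k.+1) / (q - q^-1).
Proof.
have hinv : q^-1 - q^-1^-1 != 0 by rewrite invrK -opprB oppr_eq0.
have qq1' : 1 + - q * q != 0 by rewrite mulNr -opprB oppr_eq0.
rewrite (geom_sq k (invr_neq0 q_neq0) hinv) !exprVn invrK !exprS; field_nz.
Qed.

Lemma sum_coefR a n k : (k <= n)%N ->
  \sum_(i < k.+1) coefR a n i =
  (q ^+ k.+1 - q ^- k.+1) * (u * (a / q) / q ^+ (n - k) + v * q * q ^+ (n - k)) / (q - q^-1).
Proof.
move=> kn; have qn : q ^+ n = q ^+ (n - k) * q ^+ k by rewrite -exprD subnK.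
have -> : \sum_(i < k.+1) coefR a n i =
    u * (a / q) * q^-1 ^+ n * \sum_(i < k.+1) (q * q) ^+ i
  + v * q * q ^+ n * \sum_(i < k.+1) (q^-1 * q^-1) ^+ i.
  by rewrite /coefR big_split !mulr_sumr; congr (_ + _); apply: eq_bigr => i _;
    rewrite /weight0 /weight1; ring.
rewrite (geom_sq k q_neq0 qdiff1) sum_qinv exprVn qn !exprS; field_nz.
Qed.

Lemma sum_coefL a n k : (k <= n)%N ->
  \sum_(i < k.+1) coefL a (weight1 n k) (weight0 n k) i =
  (q ^+ k.+1 - q ^- k.+1) * (us * q ^+ (n - k) + vs * (q / a) * q / q ^+ (n - k)) / (q - q^-1).
Proof.
move=> kn; have qn : q ^+ n = q ^+ (n - k) * q ^+ k by rewrite -exprD subnK.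
have -> : \sum_(i < k.+1) coefL a (weight1 n k) (weight0 n k) i =
    us * weight1 n k * \sum_(i < k.+1) (q * q) ^+ i
  + vs * (q / a) * q * weight0 n k * \sum_(i < k.+1) (q^-1 * q^-1) ^+ i.
  by rewrite /coefL big_split !mulr_sumr; congr (_ + _); apply: eq_bigr => i _; ring.
rewrite (geom_sq k q_neq0 qdiff1) sum_qinv /weight0 /weight1 !exprMn !exprVn qn !exprS.
by move: (q / a) => c; field_nz.
Qed.

End BranchingSums.

Notation sigma := (sigma q u v us vs).

(* The coefficient of sigma_k(W) in sigma_(k+1)(V(a) (x) W), as a function
   of M = q^(n-k). *)
Definition coupling a M : F :=
  (us * M + vs * (q / a) * q / M) * (u * (a / q) / M + v * q * M) / (q - q^-1) ^+ 2.

Lemma sigma0 s : sigma s 0 = 1.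
Proof. by rewrite /sigma /zeta /= big_geq // /u0 eqxx divr1. Qed.

Lemma sigma_top s : feasible q (size s).+1 -> sigma s (size s).+1 = 0.
Proof. by move=> feas; rewrite /sigma zeta_top // mul0r. Qed.

Lemma sigma_cons a s k : feasible q k.+1 -> (k <= size s)%N ->
  sigma (a :: s) k.+1 = sigma s k.+1 + coupling a (q ^+ (size s - k)) * sigma s k.
Proof.
move=> feas kn.
have qdiff j : (1 <= j <= k.+1)%N -> q ^+ j - q ^- j != 0.
  by move=> hj; apply: qdiff_neq0 => //; exact: feas.
have qdiff1 : q - q^-1 != 0 by have := qdiff 1%N isT; rewrite expr1.
have P_neq0 : \prod_(1 <= j < k.+1) (q ^+ j - q ^- j) ^+ 2 != 0.
  rewrite prodf_seq_neq0; apply/allP => j; rewrite mem_index_iota => /andP[j1 jk] /=.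
  by rewrite expf_neq0 // qdiff // j1 ltnW.
have Q_neq0 := qdiff k.+1 (leqnn _).
have M_neq0 : q ^+ (size s - k) != 0 by rewrite expf_neq0.
rewrite /sigma zeta_cons (sum_coefL qdiff1) // (sum_coefR qdiff1) // big_nat_recr //= /coupling.
set P := \prod_(1 <= j < k.+1) _; set Q := q ^+ k.+1 - _; set M := q ^+ (size s - k).
set D := q - q^-1 in qdiff1 *.
by move: (q / a) => c; field_nz.
Qed.

Lemma sigma_single a : feasible q 1 -> sigma [:: a] 1 = coupling a 1.
Proof.
move=> feas; rewrite (sigma_cons a feas) // (sigma_top (s := [::])) //.
by rewrite sigma0 expr0 add0r mulr1.
Qed.

Lemma coupling_split a M b bs c cs : a != 0 -> M != 0 -> q - q^-1 != 0 ->
  u * vs = - (b * bs) * q^-1 * (q - q^-1) ^+ 2 ->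
  v * us = - (c * cs) * q^-1 * (q - q^-1) ^+ 2 ->
  coupling a M = (M - M^-1) * (b * bs * M^-1 - c * cs * M) + coupling a 1.
Proof.
move=> a_neq0 M_neq0 qdiff1; rewrite /coupling; set D := q - q^-1 in qdiff1 *.
move=> huv hvu; have hbb : b * bs = - (u * vs) * q / D ^+ 2 by rewrite huv; field_nz.
have hcc : c * cs = - (v * us) * q / D ^+ 2 by rewrite hvu; field_nz.
by rewrite hbb hcc; field_nz.
Qed.

End StandardModule.

Theorem proposition7p11 (F : closedFieldType) (q b c bs cs u v us vs : F)
  (hq0 : q != 0) (hq2 : q ^+ 2 != 1)
  (hb : b != 0) (hc : c != 0) (hbs : bs != 0) (hcs : cs != 0)
  (huv : u * vs = - (b * bs) * q^-1 * (q - q^-1) ^+ 2)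
  (hvu : v * us = - (c * cs) * q^-1 * (q - q^-1) ^+ 2)
  (d : nat) (hd : (1 <= d)%N) (hfeas : feasible q d)
  (a : F) (ha : a != 0) (s : seq F) (hs : size s = d.-1)
  (hs0 : all (fun x => x != 0) s) :
  let sig := sigma q u v us vs in
  sig (a :: s) 0%N = 1 /\
  (forall n : nat, (1 <= n <= d.-1)%N ->
     sig (a :: s) n =
       (q ^+ (d - n) - q ^- (d - n)) * (b * bs * q ^- (d - n) - c * cs * q ^+ (d - n))
         * sig s n.-1
       + sig s n + sig [:: a] 1%N * sig s n.-1) /\
  sig (a :: s) d = sig [:: a] 1%N * sig s d.-1.
Proof.
move=> sig; rewrite {}/sig.
have size_s : (size s).+1 = d by rewrite hs prednK.
have feas k : (k <= size s)%N -> feasible q k.+1.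
  by move=> kn i /andP[i1 ik]; apply: hfeas; rewrite i1 -size_s (leq_trans ik).
have qdiff1 : q - q^-1 != 0.
  by have := qdiff_neq0 (j := 1%N) hq0; rewrite expr1; apply; apply: hfeas; rewrite hd.
have sigma1 := sigma_single hq0 u v us vs a (feas 0%N isT).
split; first exact: sigma0.
rewrite -size_s /=; split.
  move=> [|k] // /andP[_ /ltnW kn]; rewrite subSS (sigma_cons hq0 _ _ _ _ a (feas k kn) kn).
  by rewrite (coupling_split hq0 ha (expf_neq0 _ hq0) qdiff1 huv hvu) sigma1; ring.
rewrite (sigma_cons hq0 _ _ _ _ a (feas _ (leqnn _)) (leqnn _)) subnn expr0.
by rewrite (sigma_top hq0) ?add0r ?sigma1 //; exact: feas.
Qed.
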